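(* Let $\kappa$ be an uncountable regular cardinal. There is no consonant joint diamond sequence of length $\kappa$ for $\kappa$.
   Context: A filter on $\kappa$ is normal if closed under diagonal intersections and uniform if it contains all cobounded sets. A $\kappa$-list is $d\colon\kappa\to\mathcal{P}(\kappa)$ with $d(\alpha)\subseteq\alpha$. A joint diamond sequence of length $\lambda$ for $\kappa$ is a sequence $\langle d_\alpha;\alpha<\lambda\rangle$ of $\kappa$-lists such that for every sequence $\langle a_\alpha;\alpha<\lambda\rangle$ of subsets of $\kappa$ there is a proper normal uniform filter $\mathcal{F}$ on $\kappa$ with $S_\alpha=\{\xi<\kappa: d_\alpha(\xi)=a_\alpha\cap\xi\}\in\mathcal{F}$ for all $\alpha$. Such a sequence is consonant if for every sequence of targets $\langle a_\alpha;\alpha<\lambda\rangle$ there is a stationary $S\subseteq\kappa$ with $S\subseteq S_\alpha$ for all $\alpha<\lambda$. *)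

(* The cardinal kappa is modelled as a type K carrying a
   strict well-order [lt]; "kappa is an uncountable regular cardinal" is
   expressed by the properties below (order-type invariant notions only). *)
From Stdlib Require Import Relations Wellfounded.

Set Implicit Arguments.

Section Kappa.
Variable K : Type.
Variable lt : K -> K -> Prop.

Definition is_well_order : Prop :=
  (forall x, ~ lt x x) /\
  (forall x y z, lt x y -> lt y z -> lt x z) /\
  (forall x y, lt x y \/ x = y \/ lt y x) /\
  well_founded lt.

Definition uncountable : Prop :=
  ~ exists f : K -> nat, forall x y, f x = f y -> x = y.

(* regular: cf(kappa) = kappa, i.e. no map from a proper initial
   segment {eta | eta < xi} is cofinal (every such map is bounded). *)
Definition regular : Prop :=
  forall (xi : K) (f : {eta : K | lt eta xi} -> K),
    exists beta, forall i, lt (f i) beta.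

Definition subset (A B : K -> Prop) : Prop := forall x, A x -> B x.

Definition cobounded (S : K -> Prop) : Prop :=
  exists beta, forall xi, ~ lt xi beta -> S xi.

Definition diag_int (X : K -> K -> Prop) : K -> Prop :=
  fun xi => forall alpha, lt alpha xi -> X alpha xi.

Definition proper_filter (F : (K -> Prop) -> Prop) : Prop :=
  F (fun _ => True) /\
  ~ F (fun _ => False) /\
  (forall A B, F A -> subset A B -> F B) /\
  (forall A B, F A -> F B -> F (fun x => A x /\ B x)).

Definition normal_filter (F : (K -> Prop) -> Prop) : Prop :=
  forall X : K -> K -> Prop, (forall alpha, F (X alpha)) -> F (diag_int X).

Definition uniform_filter (F : (K -> Prop) -> Prop) : Prop :=
  forall S, cobounded S -> F S.

Definition unbounded (C : K -> Prop) : Prop :=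
  forall beta, exists xi, lt beta xi /\ C xi.

Definition closed (C : K -> Prop) : Prop :=
  forall delta, (exists eta, lt eta delta) ->
    (forall eta, lt eta delta -> exists c, C c /\ lt eta c /\ lt c delta) ->
    C delta.

Definition club (C : K -> Prop) : Prop := closed C /\ unbounded C.

Definition stationary (S : K -> Prop) : Prop :=
  forall C, club C -> exists xi, S xi /\ C xi.

(* A kappa-list d : kappa -> P(kappa) with d(xi) ⊆ xi, given as a relation:
   [d xi eta] means eta ∈ d(xi). *)
Definition kappa_list (d : K -> K -> Prop) : Prop :=
  forall xi eta, d xi eta -> lt eta xi.

Definition guess_set (d : K -> K -> Prop) (a : K -> Prop) : K -> Prop :=
  fun xi => forall eta, d xi eta <-> (a eta /\ lt eta xi).

(* Joint diamond sequence of length kappa (indexed by K):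
   D alpha is the alpha-th kappa-list. *)
Definition joint_diamond (D : K -> K -> K -> Prop) : Prop :=
  (forall alpha, kappa_list (D alpha)) /\
  forall a : K -> K -> Prop,
    exists F : (K -> Prop) -> Prop,
      proper_filter F /\ normal_filter F /\ uniform_filter F /\
      forall alpha, F (guess_set (D alpha) (a alpha)).

Definition consonant (D : K -> K -> K -> Prop) : Prop :=
  forall a : K -> K -> Prop,
    exists S : K -> Prop, stationary S /\
      forall alpha, subset S (guess_set (D alpha) (a alpha)).

End Kappa.

From Stdlib Require Import Classical.

Set Implicit Arguments.

(* Diagonalise: take the target
   a_alpha = {eta < alpha | eta ∉ d_alpha(alpha)}.  A stationary set meets
   the club of nonzero ordinals, and at a nonzero xi in it the guess
   d_xi(xi) = a_xi ∩ xi is contradictory at every eta < xi. *)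

Section Diagonal.
Variable K : Type.
Variable lt : K -> K -> Prop.

Definition diagonal_target (D : K -> K -> K -> Prop) : K -> K -> Prop :=
  fun alpha eta => lt eta alpha /\ ~ D alpha alpha eta.

Lemma diagonal_target_not_guessed (D : K -> K -> K -> Prop) (xi eta : K) :
  lt eta xi -> ~ guess_set lt (D xi) (diagonal_target D xi) xi.
Proof.
  intros Heta Hguess.
  specialize (Hguess eta); unfold diagonal_target in Hguess; tauto.
Qed.

Lemma regular_no_maximum :
  (forall x y, lt x y \/ x = y \/ lt y x) -> uncountable K -> regular lt ->
  forall beta, exists xi, lt beta xi.
Proof.
  intros Htot Hunc Hreg beta; apply NNPP; intro Hmax.
  (* A maximum bounds nothing, so regularity leaves nothing below it. *)
  assert (Hbelow : forall x, ~ lt x beta).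
  { intros x Hx; destruct (Hreg beta (fun _ => beta)) as [g Hg].
    exact (Hmax (ex_intro _ g (Hg (exist _ x Hx)))). }
  assert (Hsingle : forall x, x = beta).
  { intro x; destruct (Htot x beta) as [H | [H | H]]; trivial.
    - contradiction (Hbelow x).
    - contradiction Hmax; exists x; exact H. }
  apply Hunc; exists (fun _ => 0); intros x y _.
  now rewrite (Hsingle x), (Hsingle y).
Qed.

Lemma club_nonzero :
  (forall beta, exists xi, lt beta xi) -> club lt (fun xi => exists eta, lt eta xi).
Proof.
  intro Hunb; split.
  - intros delta Hdelta _; exact Hdelta.
  - intro beta; destruct (Hunb beta) as [xi Hxi].
    exists xi; split; [exact Hxi | exists beta; exact Hxi].
Qed.

Lemma not_consonant (D : K -> K -> K -> Prop) :
  (forall beta, exists xi, lt beta xi) -> ~ consonant lt D.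
Proof.
  intros Hunb Hcons.
  destruct (Hcons (diagonal_target D)) as [S [Hstat Hguess]].
  destruct (Hstat _ (club_nonzero Hunb)) as [xi [HS [eta Heta]]].
  exact (diagonal_target_not_guessed Heta (Hguess xi xi HS)).
Qed.

End Diagonal.

Theorem proposition5p2 (K : Type) (lt : K -> K -> Prop)
  (Hwo : is_well_order lt) (Hunc : uncountable K) (Hreg : regular lt) :
  ~ exists D : K -> K -> K -> Prop, joint_diamond lt D /\ consonant lt D.
Proof.
  intros [D [_ Hcons]].
  destruct Hwo as [_ [_ [Htot _]]].
  exact (not_consonant (regular_no_maximum Htot Hunc Hreg) Hcons).
Qed.
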